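(* Assume $f$ has a unique global maximizer, contains no weak epistasis, and every order-1 epistasis of $f$ is strict. Then any two distinct maximal cliques of the epistatic graph are vertex-disjoint.
   Context: Fix $\ell\ge1$, loci $V=\{0,\dots,\ell-1\}$, chromosomes $\vec y\in\{0,1\}^V$, fitness $f:\{0,1\}^V\to\mathbb R$ (maximized) with unique global maximizer $g$. An assignment $A$ is a set of pairs $(v,a)$ with at most one pair per locus; coverage $\mathcal C(A)$; $A[v]$ its allele at $v$. $\Psi_A$ is the set of chromosomes agreeing with $A$ on $\mathcal C(A)$ with maximum fitness among such chromosomes; $\Psi_A[v]=\{\psi_v:\psi\in\Psi_A\}$. Epistasis: for $v\in V$ and nonempty $S\subseteq V\setminus\{v\}$, $S\Rightarrow v$ iff for every $s\in S$ there exists an assignment $A$ with $\mathcal C(A)=S$ and $\Psi_A[v]\neq\Psi_{A\setminus\{(s,A[s])\}}[v]$. An epistasis $S\Rightarrow v$ with $|S|\ge2$ is weak if no nonempty proper subset $T\subsetneq S$ has $T\Rightarrow v$. An order-1 epistasis $\{u\}\Rightarrow v$ is strict, written $u\rightarrow v$, if $\Psi_{\{(u,1-g[u])\}}[v]=\{1-g[v]\}$. The epistatic graph is the directed graph on $V$ with edge $u\to v$ iff $\{u\}\Rightarrow v$. A clique is a set of vertices $C$ with $a\rightarrow b$ for all distinct $a,b\in C$; it is maximal if it is not properly contained in another clique. *)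

From mathcomp Require Import all_boot all_order all_algebra.
Set Implicit Arguments. Unset Strict Implicit. Unset Printing Implicit Defensive.
Import Order.TTheory GRing.Theory Num.Theory.
Local Open Scope ring_scope.

Section Epistasis.
Variables (R : realDomainType) (l : nat).

Definition chrom := {ffun 'I_l -> bool}.

(* An assignment: at most one allele per locus, i.e. a partial map V -> {0,1}. *)
Definition assignment := {ffun 'I_l -> option bool}.

Definition coverage (A : assignment) : {set 'I_l} := [set v | A v != None].

Definition remove_locus (A : assignment) (s : 'I_l) : assignment :=
  [ffun w => if w == s then None else A w].

Definition single (u : 'I_l) (a : bool) : assignment :=
  [ffun w => if w == u then Some a else None].

Definition agrees (A : assignment) (y : chrom) : bool :=
  [forall v, if A v is Some a then y v == a else true].

Variable f : chrom -> R.

Definition Psi (A : assignment) : {set chrom} :=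
  [set y | agrees A y && [forall z, agrees A z ==> (f z <= f y)]].

Definition Psi_at (A : assignment) (v : 'I_l) : {set bool} :=
  [set (y : chrom) v | y in Psi A].

Definition epistasis (S : {set 'I_l}) (v : 'I_l) : Prop :=
  v \notin S /\ S != set0 /\
  forall s, s \in S ->
    exists A : assignment, coverage A = S /\
      Psi_at A v != Psi_at (remove_locus A s) v.

Definition weak_epistasis (S : {set 'I_l}) (v : 'I_l) : Prop :=
  epistasis S v /\ (2 <= #|S|)%N /\
  ~ (exists T : {set 'I_l}, T != set0 /\ T \proper S /\ epistasis T v).

Variable g : chrom.

Definition strict_arrow (u v : 'I_l) : Prop :=
  epistasis [set u] v /\ Psi_at (single u (~~ g u)) v = [set ~~ g v].

Definition is_clique (C : {set 'I_l}) : Prop :=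
  forall a b, a \in C -> b \in C -> a != b -> strict_arrow a b.

Definition is_maximal_clique (C : {set 'I_l}) : Prop :=
  is_clique C /\ ~ (exists D : {set 'I_l}, C \proper D /\ is_clique D).

Definition unique_global_maximizer : Prop :=
  forall y : chrom, y != g -> f y < f g.

End Epistasis.

From mathcomp Require Import all_boot all_order all_algebra.
Import Order.TTheory GRing.Theory Num.Theory.
Local Open Scope ring_scope.
Set Implicit Arguments. Unset Strict Implicit.

(* If a -> w and w -> a are both strict, then the optimal chromosomes
   under the constraint "locus a flipped away from g" and under "locus w flipped
   away from g" coincide, since an optimum of either constraint satisfies the
   other.  Hence every strict arrow w -> b is inherited by a, and since the only
   optimum of the unconstrained problem is g, this is an epistasis {a} => b.  So
   two cliques sharing a vertex have a clique as their union, and maximality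
   forces two such maximal cliques to be equal. *)

Section SingleAssignments.
Variables (R : realDomainType) (l : nat) (f : chrom l -> R).

Definition empty_assignment : assignment l := [ffun => None].

Lemma agrees_single (u : 'I_l) a (y : chrom l) : agrees (single u a) y = (y u == a).
Proof.
apply/forallP/eqP => [/(_ u)|yu v]; first by rewrite ffunE eqxx => /eqP.
by rewrite ffunE; case: eqP => // ->; apply/eqP.
Qed.

Lemma agrees_empty (y : chrom l) : agrees empty_assignment y.
Proof. by apply/forallP => v; rewrite ffunE. Qed.

Lemma in_Psi_single (u : 'I_l) a y : (y \in Psi f (single u a)) =
  (y u == a) && [forall z : chrom l, (z u == a) ==> (f z <= f y)].
Proof.
rewrite inE agrees_single; congr (_ && _).
by apply: eq_forallb => z; rewrite agrees_single.
Qed.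

Lemma coverage_single (u : 'I_l) a : coverage (single u a) = [set u].
Proof. by apply/setP => v; rewrite !inE ffunE; case: (v == u). Qed.

Lemma remove_locus_single (u : 'I_l) a : remove_locus (single u a) u = empty_assignment.
Proof. by apply/ffunP => v; rewrite !ffunE; case: (v == u). Qed.

Lemma epistasis1_single (u v : 'I_l) a : v != u ->
  Psi_at f (single u a) v != Psi_at f empty_assignment v ->
  epistasis f [set u] v.
Proof.
move=> vu neq; split; first by rewrite in_set1.
split; first by apply/set0Pn; exists u; rewrite set11.
move=> s /set1P ->; exists (single u a).
by rewrite coverage_single remove_locus_single.
Qed.

Lemma Psi_empty g : unique_global_maximizer f g ->
  Psi f empty_assignment = [set g].
Proof.
move=> gmax; apply/setP => y; rewrite !inE agrees_empty /=.
have [->|yg] := eqVneq y g.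
  apply/forallP => z; apply/implyP => _.
  by have [->|zg] := eqVneq z g; [exact: lexx | exact/ltW/gmax].
apply/negP => /forallP /(_ g); rewrite agrees_empty /= leNgt.
by rewrite gmax.
Qed.

End SingleAssignments.

Section StrictArrows.
Variables (R : realDomainType) (l : nat) (f : chrom l -> R) (g : chrom l).

Let flip u := Psi f (single u (~~ g u)).

Lemma strict_arrow_Psi a w y :
  strict_arrow f g a w -> y \in flip a -> y w = ~~ g w.
Proof.
move=> [_ Paw] ya; apply/set1P; rewrite -Paw.
exact: imset_f.
Qed.

Lemma strict_arrow_Psi_neq0 a w : strict_arrow f g a w -> exists y, y \in flip a.
Proof.
move=> [_ Paw].
have /imsetP [y ya _] : ~~ g w \in Psi_at f (single a (~~ g a)) w.
  by rewrite Paw set11.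
by exists y.
Qed.

Lemma Psi_flip_sub a w :
  strict_arrow f g a w -> strict_arrow f g w a -> flip a \subset flip w.
Proof.
move=> aw wa; apply/subsetP => y ya.
have [z wz] := strict_arrow_Psi_neq0 wa.
move: (ya) (wz); rewrite !in_Psi_single => /andP [_ /forallP ymax] /andP [_ /forallP zmax].
rewrite (strict_arrow_Psi aw ya) eqxx /=; apply/forallP => x; apply/implyP => xw.
apply: le_trans (implyP (zmax x) xw) _.
by apply: (implyP (ymax z)); rewrite (strict_arrow_Psi wa wz).
Qed.

Hypothesis gmax : unique_global_maximizer f g.

Lemma strict_arrow_trans a w b : a != b ->
  strict_arrow f g a w -> strict_arrow f g w a -> strict_arrow f g w b ->
  strict_arrow f g a b.
Proof.
move=> ab aw wa [_ Pwb].
have flip_aw : flip a = flip w by apply/eqP; rewrite eqEsubset !Psi_flip_sub.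
have Pab : Psi_at f (single a (~~ g a)) b = [set ~~ g b].
  by rewrite /Psi_at -/(flip a) flip_aw.
split=> //; apply: (epistasis1_single (a := ~~ g a)); first by rewrite eq_sym.
rewrite Pab /Psi_at (Psi_empty gmax) imset_set1.
by apply/negP => /eqP /setP /(_ (~~ g b)); rewrite !inE eqxx; case: (g b).
Qed.

Lemma clique_setU C1 C2 w : is_clique f g C1 -> is_clique f g C2 ->
  w \in C1 -> w \in C2 -> is_clique f g (C1 :|: C2).
Proof.
have across D1 D2 : is_clique f g D1 -> is_clique f g D2 -> w \in D1 -> w \in D2 ->
    forall a b, a \in D1 -> b \in D2 -> a != b -> strict_arrow f g a b.
  move=> K1 K2 w1 w2 a b a1 b2 ab.
  have [aw|aw] := eqVneq a w; first by rewrite aw in ab *; exact: K2.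
  have [bw|bw] := eqVneq b w; first by rewrite bw in ab *; exact: K1.
  apply: (@strict_arrow_trans a w b) => //; [exact: K1 | apply: K1 | apply: K2];
    by rewrite // eq_sym.
move=> K1 K2 w1 w2 a b /setUP [a1|a2] /setUP [b1|b2].
- exact: K1.
- exact: (across C1 C2).
- exact: (across C2 C1).
- exact: K2.
Qed.

End StrictArrows.

Lemma maximal_clique_absorb (R : realDomainType) l (f : chrom l -> R) g C D :
  is_maximal_clique f g C -> is_clique f g (C :|: D) -> D \subset C.
Proof.
move=> [_ Cmax] CD; apply/negPn/negP => DC.
by apply: Cmax; exists (C :|: D); rewrite properUl.
Qed.

Theorem corollary6 (R : realDomainType) (l : nat) (f : chrom l -> R) (g : chrom l) :
  (0 < l)%N ->
  unique_global_maximizer f g ->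
  (forall (S : {set 'I_l}) (v : 'I_l), ~ weak_epistasis f S v) ->
  (forall u v : 'I_l, epistasis f [set u] v -> strict_arrow f g u v) ->
  forall C1 C2 : {set 'I_l},
    is_maximal_clique f g C1 -> is_maximal_clique f g C2 -> C1 != C2 ->
    [disjoint C1 & C2].
Proof.
move=> _ gmax _ _ C1 C2 C1max C2max; apply: contraNT.
rewrite -setI_eq0 => /set0Pn [w /setIP [w1 w2]].
have C12 := clique_setU gmax C1max.1 C2max.1 w1 w2.
rewrite eqEsubset (maximal_clique_absorb C1max C12).
by rewrite setUC in C12; rewrite (maximal_clique_absorb C2max C12).
Qed.
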